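(* Let $M$ be a monoid in $\mathcal{C}$ and let $V=\mathbb{R}\otimes_\mathbb{Z}\mathrm{gp}(M)$. If $\mathsf{cone}_V(M)$ is polyhedral, then $M$ is finitary.
   Context: Convention: all monoids are commutative, cancellative, and reduced, written additively; $M^\bullet=M\setminus\{0\}$. $\mathcal{C}$ is the class of monoids isomorphic to a submonoid of a free commutative monoid of finite rank (equivalently, of $(\mathbb{N}^d,+)$). $M$ is regarded as a submonoid of $V$ via $M\hookrightarrow\mathrm{gp}(M)\hookrightarrow V$; $\mathsf{cone}_V(M)$ is the set of finite nonnegative linear combinations of elements of $M$. A cone is polyhedral if it is an intersection of finitely many closed half-spaces (equivalently, the conic hull of a finite set). A monoid is a BFM if every element is a sum of atoms and each element has a finite set of factorization lengths. $M$ is finitary if it is a BFM and there exist a finite $S\subseteq M$ and a positive integer $n$ with $nM^\bullet\subseteq S+M$, where $nM^\bullet=\{x_1+\dots+x_n:x_i\in M^\bullet\}$. *)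

From Stdlib Require Import Reals List Arith.
Import ListNotations.
Open Scope R_scope.

Section MonoidDefs.
Variable T : Type.
Variable add : T -> T -> T.
Variable zero : T.

Definition msum (l : list T) : T := fold_right add zero l.

Definition is_atom (x : T) : Prop :=
  x <> zero /\ forall a b, x = add a b -> a = zero \/ b = zero.

Definition has_fact_length (x : T) (n : nat) : Prop :=
  exists l : list T, Forall is_atom l /\ length l = n /\ msum l = x.

Definition BFM : Prop :=
  (forall x : T, exists n, has_fact_length x n) /\
  (forall x : T, exists N : nat, forall n, has_fact_length x n -> (n <= N)%nat).

Definition in_nMbullet (n : nat) (x : T) : Prop :=
  exists l : list T, length l = n /\ Forall (fun y => y <> zero) l /\ msum l = x.

Definition finitary : Prop :=
  BFM /\
  exists (S : list T) (n : nat), (1 <= n)%nat /\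
    forall x, in_nMbullet n x -> exists s m, In s S /\ x = add s m.
End MonoidDefs.

Definition embeds_in_Nd (T : Type) (add : T -> T -> T) (zero : T)
    (d : nat) (phi : T -> nat -> nat) : Prop :=
  (forall i, (i < d)%nat -> phi zero i = 0%nat) /\
  (forall x y i, (i < d)%nat -> phi (add x y) i = (phi x i + phi y i)%nat) /\
  (forall x y, (forall i, (i < d)%nat -> phi x i = phi y i) -> x = y).

Fixpoint lincomb (cs : list R) (gs : list (nat -> R)) (i : nat) : R :=
  match cs, gs with
  | c :: cs', g :: gs' => c * g i + lincomb cs' gs' i
  | _, _ => 0
  end.

Definition in_conic_hull (d : nat) (gs : list (nat -> R)) (v : nat -> R) : Prop :=
  exists cs : list R, length cs = length gs /\ Forall (fun c => 0 <= c) cs /\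
    forall i, (i < d)%nat -> v i = lincomb cs gs i.

Definition realvec (T : Type) (phi : T -> nat -> nat) (m : T) : nat -> R :=
  fun j => INR (phi m j).

Definition in_cone (T : Type) (d : nat) (phi : T -> nat -> nat) (v : nat -> R) : Prop :=
  exists ms : list T, in_conic_hull d (map (@realvec T phi) ms) v.

Definition cone_polyhedral (T : Type) (d : nat) (phi : T -> nat -> nat) : Prop :=
  exists gs : list (nat -> R),
    forall v : nat -> R, @in_cone T d phi v <-> in_conic_hull d gs v.

(* 1. Since cone(M) is the conic hull of finitely many vectors, each of which is a
      nonnegative combination of elements of M, it is the conic hull of a finite
      list F of elements of M.
   2. Rounding down the coefficients, every x in M decomposes as
      phi x = sum_j w_j phi(F_j) + r with w in N^F and r in the box [0, sum_j phi(F_j)].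
   3. Dickson's lemma, applied to these decompositions with coordinates (w, r, C - r)
      where C = sum_j phi(F_j),
      shows that each nonzero x dominates a decomposition of a nonzero y with the
      same remainder and bounded weights v; hence x = y + sum_j (w_j - v_j) F_j with
      phi y in a fixed box, and only finitely many y in M fit in a box.
   4. M is a BFM since the total degree in N^d is additive and positive on M^bullet. *)

From Stdlib Require Import Reals List Lia Lra Classical ZArith.
Import ListNotations.

Local Open Scope nat_scope.

Lemma uniform_bound (X : Type) (Q : X -> nat -> Prop) :
  (forall x B B', B <= B' -> Q x B -> Q x B') ->
  forall L, (forall x, In x L -> exists B, Q x B) -> exists B, forall x, In x L -> Q x B.
Proof.
  intros Hmono L. induction L as [|a L IH]; intros H.
  - exists 0. intros x [].
  - destruct (H a (or_introl eq_refl)) as [Ba HBa].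
    destruct IH as [BL HBL]; [intros x Hx; apply H; now right|].
    exists (Nat.max Ba BL). intros x [<-|Hx].
    + apply (Hmono _ Ba); [lia|exact HBa].
    + apply (Hmono _ BL); [lia|auto].
Qed.

Section Dickson.
Variable A : Type.

Definition small_minorants (I : list (A -> nat)) (P : A -> Prop) (B : nat) : Prop :=
  forall u, P u -> exists v, P v /\
    (forall p, In p I -> p v <= p u) /\ (forall p, In p I -> p v <= B).

Lemma small_minorants_mono I P B B' :
  B <= B' -> small_minorants I P B -> small_minorants I P B'.
Proof.
  intros HB H u Hu. destruct (H u Hu) as [v [Hv [H1 H2]]].
  exists v. split; [exact Hv|]. split; [exact H1|]. intros p Hp. specialize (H2 p Hp). lia.
Qed.

(* Dickson's lemma, by induction on the number of coordinates: fix [u0] in [P];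
   an element that does not dominate [u0] lies in one of finitely many slices
   [p = c] (with [c < p u0]), on which coordinate [p] is constant and can be dropped. *)
Lemma dickson_upto n : forall I, length I <= n ->
  forall P, exists B, small_minorants I P B.
Proof.
  induction n as [|n IH]; intros I HI P.
  - destruct I; [|simpl in HI; lia].
    exists 0. intros u Hu. exists u. split; [exact Hu|]. split; intros p [].
  - destruct (classic (exists u0, P u0)) as [[u0 Hu0]|Hempty].
    2:{ exists 0. intros u Hu. exfalso. eauto. }
    assert (Hslice : forall p, In p I -> forall c,
               exists B, small_minorants I (fun a => P a /\ p a = c) B).
    { intros p Hp c. destruct (in_split _ _ Hp) as [I1 [I2 HI12]]. subst I.
      destruct (IH (I1 ++ I2)) with (P := fun a => P a /\ p a = c) as [B HB].
      { rewrite length_app in *. simpl in HI. lia. }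
      exists (B + c). intros u Hu. destruct (HB u Hu) as [v [Hv [H1 H2]]].
      exists v. split; [exact Hv|].
      destruct Hu as [_ Hpu], Hv as [_ Hpv].
      split; intros q Hq; apply in_app_iff in Hq; destruct Hq as [Hq|[<-|Hq]];
        try lia.
      + apply H1, in_app_iff; auto.
      + apply H1, in_app_iff; auto.
      + enough (q v <= B) by lia. apply H2, in_app_iff; auto.
      + enough (q v <= B) by lia. apply H2, in_app_iff; auto. }
    destruct (uniform_bound _ (fun p B => forall c, In c (seq 0 (p u0)) ->
                 small_minorants I (fun a => P a /\ p a = c) B)) with (L := I) as [B1 HB1].
    { intros p B B' HBB' H c Hc. exact (small_minorants_mono _ _ _ _ HBB' (H c Hc)). }
    { intros p Hp. apply uniform_bound; [intros; eapply small_minorants_mono; eauto|].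
      intros c _. exact (Hslice p Hp c). }
    destruct (uniform_bound _ (fun p B => p u0 <= B)) with (L := I) as [B2 HB2].
    { intros; lia. }
    { intros p _. exists (p u0). lia. }
    exists (Nat.max B1 B2). intros u Hu.
    destruct (classic (exists p, In p I /\ p u < p u0)) as [[p [Hp Hlt]]|Hdom].
    + destruct (HB1 p Hp (p u) ltac:(apply in_seq; lia) u (conj Hu eq_refl))
        as [v [[Hv _] [H1 H2]]].
      exists v. split; [exact Hv|]. split; [exact H1|].
      intros q Hq. specialize (H2 q Hq). lia.
    + exists u0. split; [exact Hu0|]. split.
      * intros p Hp. apply Nat.nlt_ge. intros Hlt. apply Hdom. eauto.
      * intros p Hp. specialize (HB2 p Hp). lia.
Qed.

Theorem dickson I P : exists B, small_minorants I P B.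
Proof. exact (dickson_upto (length I) I (le_n _) P). Qed.

End Dickson.

Lemma finite_preimage (X Y : Type) (f : X -> Y) (Q : X -> Prop) :
  (forall a b, Q a -> Q b -> f a = f b -> a = b) ->
  forall L, exists S, forall a, Q a -> In (f a) L -> In a S.
Proof.
  intros Hinj L. induction L as [|y L [S HS]].
  - exists []. intros a _ [].
  - destruct (classic (exists a, Q a /\ f a = y)) as [[a0 [Qa0 Ha0]]|Hnone].
    + exists (a0 :: S). intros a Qa [Hy|Hy].
      * left. apply Hinj; congruence.
      * right. auto.
    + exists S. intros a Qa [Hy|Hy]; [exfalso; eauto|auto].
Qed.

Fixpoint box (bnd : nat -> nat) (s : list nat) : list (list nat) :=
  match s with
  | [] => [[]]
  | i :: s' => flat_map (fun l => map (fun c => c :: l) (seq 0 (S (bnd i)))) (box bnd s')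
  end.

Lemma in_box bnd (f : nat -> nat) s :
  (forall i, In i s -> f i <= bnd i) -> In (map f s) (box bnd s).
Proof.
  induction s as [|i s IH]; intros H; cbn [box map]; [now left|].
  apply in_flat_map. exists (map f s). split; [apply IH; intros; apply H; now right|].
  apply in_map_iff. exists (f i). split; [reflexivity|]. apply in_seq.
  specialize (H i (or_introl eq_refl)). lia.
Qed.

Lemma map_seq_eq (f g : nat -> nat) n :
  map f (seq 0 n) = map g (seq 0 n) -> forall i, i < n -> f i = g i.
Proof.
  intros H i Hi. assert (Hin : In i (seq 0 n)) by (apply in_seq; lia).
  revert H Hin. generalize (seq 0 n). induction l as [|a l IH]; simpl; [tauto|].
  intros H [<-|Hin]; injection H; auto.
Qed.

Fixpoint sum_below (f : nat -> nat) (n : nat) : nat :=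
  match n with 0 => 0 | S n => f n + sum_below f n end.

Lemma sum_below_add f g h n :
  (forall i, i < n -> f i = g i + h i) -> sum_below f n = sum_below g n + sum_below h n.
Proof. induction n; simpl; intros H; auto. rewrite H, IHn; auto; lia. Qed.

Lemma sum_below_zero_inv f n : sum_below f n = 0 -> forall i, i < n -> f i = 0.
Proof.
  induction n; simpl; intros H i Hi; [lia|].
  destruct (Nat.eq_dec i n); [subst; lia|]. apply IHn; lia.
Qed.

Fixpoint ncomb {T : Type} (phi : T -> nat -> nat) (F : list T) (w : nat -> nat) (i : nat) : nat :=
  match F with
  | [] => 0
  | f :: F' => w 0 * phi f i + ncomb phi F' (fun j => w (S j)) i
  end.

Lemma ncomb_mono {T : Type} (phi : T -> nat -> nat) F i : forall w w',
  (forall j, j < length F -> w j <= w' j) -> ncomb phi F w i <= ncomb phi F w' i.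
Proof.
  induction F as [|f F IH]; intros w w' H; simpl; [lia|].
  pose proof (Nat.mul_le_mono_r _ _ (phi f i) (H 0 ltac:(simpl; lia))).
  pose proof (IH (fun j => w (S j)) (fun j => w' (S j))
                 ltac:(intros j Hj; apply H; simpl; lia)).
  lia.
Qed.

Lemma ncomb_sub {T : Type} (phi : T -> nat -> nat) F i : forall w w',
  (forall j, j < length F -> w' j <= w j) ->
  ncomb phi F (fun j => w j - w' j) i + ncomb phi F w' i = ncomb phi F w i.
Proof.
  induction F as [|f F IH]; intros w w' H; simpl; [lia|].
  pose proof (Nat.mul_le_mono_r _ _ (phi f i) (H 0 ltac:(simpl; lia))).
  pose proof (IH (fun j => w (S j)) (fun j => w' (S j))
                 ltac:(intros j Hj; apply H; simpl; lia)).
  rewrite Nat.mul_sub_distr_r. lia.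
Qed.

Section Embedding.
Variables (T : Type) (add : T -> T -> T) (zero : T) (d : nat) (phi : T -> nat -> nat).
Hypothesis Hemb : embeds_in_Nd T add zero d phi.

Lemma phi_zero i : i < d -> phi zero i = 0.
Proof. apply Hemb. Qed.

Lemma phi_add x y i : i < d -> phi (add x y) i = phi x i + phi y i.
Proof. apply Hemb. Qed.

Lemma phi_inj x y : (forall i, i < d -> phi x i = phi y i) -> x = y.
Proof. apply Hemb. Qed.

Lemma add_zero_r x : add x zero = x.
Proof. apply phi_inj. intros i Hi. rewrite phi_add, phi_zero by exact Hi. lia. Qed.

Lemma add_zero_l x : add zero x = x.
Proof. apply phi_inj. intros i Hi. rewrite phi_add, phi_zero by exact Hi. lia. Qed.

Lemma msum_app l1 l2 : msum T add zero (l1 ++ l2) = add (msum T add zero l1) (msum T add zero l2).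
Proof.
  induction l1 as [|a l1 IH]; simpl; [now rewrite add_zero_l|].
  rewrite IH. apply phi_inj. intros i Hi. rewrite !phi_add by exact Hi. lia.
Qed.

Definition degree (x : T) : nat := sum_below (phi x) d.

Lemma degree_add x y : degree (add x y) = degree x + degree y.
Proof. apply sum_below_add. intros i Hi. now apply phi_add. Qed.

Lemma degree_pos x : x <> zero -> 1 <= degree x.
Proof.
  intros Hx. destruct (Nat.eq_dec (degree x) 0) as [H|H]; [|lia].
  exfalso. apply Hx, phi_inj. intros i Hi.
  rewrite phi_zero by exact Hi. exact (sum_below_zero_inv _ _ H i Hi).
Qed.

Lemma length_le_degree l :
  Forall (fun y => y <> zero) l -> length l <= degree (msum T add zero l).
Proof.
  induction 1 as [|y l Hy _ IH]; simpl; [lia|].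
  rewrite degree_add. pose proof (degree_pos y Hy). lia.
Qed.

Lemma split_non_atom x : x <> zero -> ~ is_atom T add zero x ->
  exists a b, x = add a b /\ a <> zero /\ b <> zero.
Proof.
  intros Hx Hna. apply NNPP. intros Hno. apply Hna. split; [exact Hx|].
  intros a b Hab. apply NNPP. intros Hab0. apply Hno. exists a, b.
  split; [exact Hab|]. split; intros ->; auto.
Qed.

(* Atomic factorizations exist by induction on the degree, and every factorization
   of [x] has length at most [degree x]: [M] is a BFM. *)
Lemma embedded_BFM : BFM T add zero.
Proof.
  split.
  - assert (Hfact : forall n x, degree x <= n ->
              exists l, Forall (is_atom T add zero) l /\ msum T add zero l = x).
    { induction n as [|n IH]; intros x Hx;
        (destruct (classic (x = zero)) as [->|Hz]; [exists []; split; [constructor|reflexivity]|]).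
      - pose proof (degree_pos x Hz). lia.
      - destruct (classic (is_atom T add zero x)) as [Ha|Ha].
        { exists [x]. split; [constructor; auto|]. apply add_zero_r. }
        destruct (split_non_atom x Hz Ha) as [a [b [-> [Ha0 Hb0]]]].
        rewrite degree_add in Hx. pose proof (degree_pos a Ha0). pose proof (degree_pos b Hb0).
        destruct (IH a ltac:(lia)) as [la [Hla <-]]. destruct (IH b ltac:(lia)) as [lb [Hlb <-]].
        exists (la ++ lb). split; [apply Forall_app; auto|apply msum_app]. }
    intros x. destruct (Hfact _ x (le_n _)) as [l [Hl Hs]]. exists (length l), l. auto.
  - intros x. exists (degree x). intros n [l [Hl [<- <-]]].
    apply length_le_degree. eapply Forall_impl; [|exact Hl]. now intros a [Ha _].
Qed.

Lemma bounded_elements_finite (b : nat -> nat) :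
  exists S, forall t, (forall i, i < d -> phi t i <= b i) -> In t S.
Proof.
  destruct (finite_preimage T (list nat) (fun t => map (phi t) (seq 0 d))
              (fun t => forall i, i < d -> phi t i <= b i)) with (L := box b (seq 0 d))
    as [S HS].
  { intros x y _ _ Hxy. apply phi_inj. exact (map_seq_eq _ _ _ Hxy). }
  exists S. intros t Ht. apply HS; [exact Ht|]. apply in_box.
  intros i Hi. apply in_seq in Hi. apply Ht. lia.
Qed.

Fixpoint nmul (n : nat) (f : T) : T :=
  match n with 0 => zero | S n => add f (nmul n f) end.

Fixpoint ncomb_elt (F : list T) (w : nat -> nat) : T :=
  match F with
  | [] => zero
  | f :: F' => add (nmul (w 0) f) (ncomb_elt F' (fun j => w (S j)))
  end.

Lemma phi_nmul n f i : i < d -> phi (nmul n f) i = n * phi f i.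
Proof.
  intros Hi. induction n; simpl; [now apply phi_zero|].
  rewrite phi_add, IHn by exact Hi. lia.
Qed.

Lemma phi_ncomb_elt F i : i < d -> forall w, phi (ncomb_elt F w) i = ncomb phi F w i.
Proof.
  intros Hi. induction F as [|f F IH]; intros w; simpl; [now apply phi_zero|].
  rewrite phi_add, IH, phi_nmul by exact Hi. reflexivity.
Qed.

End Embedding.

Section RealCones.
Local Open Scope R_scope.

Lemma lincomb_app cs1 cs2 gs1 gs2 i : length cs1 = length gs1 ->
  lincomb (cs1 ++ cs2) (gs1 ++ gs2) i = lincomb cs1 gs1 i + lincomb cs2 gs2 i.
Proof.
  revert gs1. induction cs1 as [|c cs1 IH]; intros [|g gs1] H; simpl in *; try lia.
  - lra.
  - rewrite IH by lia. lra.
Qed.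

Lemma lincomb_scale c cs gs i : lincomb (map (Rmult c) cs) gs i = c * lincomb cs gs i.
Proof.
  revert gs. induction cs as [|x cs IH]; intros [|g gs]; simpl; try lra.
  rewrite IH. lra.
Qed.

Lemma lincomb_zeros n gs i : lincomb (repeat 0 n) gs i = 0.
Proof.
  revert gs. induction n as [|n IH]; intros [|g gs]; simpl; try lra.
  rewrite IH. lra.
Qed.

Lemma conic_hull_generator d gs g : In g gs -> in_conic_hull d gs g.
Proof.
  induction gs as [|g0 gs IH]; intros Hin; [destruct Hin|].
  destruct Hin as [<-|Hin].
  - exists (1 :: repeat 0 (length gs)). split; [simpl; now rewrite repeat_length|].
    split.
    + constructor; [lra|]. apply Forall_forall. intros c Hc. apply repeat_spec in Hc. lra.
    + intros i _. simpl. rewrite lincomb_zeros. lra.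
  - destruct (IH Hin) as [cs [H1 [H2 H3]]]. exists (0 :: cs).
    split; [simpl; auto|]. split; [constructor; [lra|auto]|].
    intros i Hi. simpl. rewrite <- H3 by exact Hi. lra.
Qed.

Lemma conic_hull_compose (X : Type) (f : X -> nat -> R) d gs :
  (forall g, In g gs -> exists ms, in_conic_hull d (map f ms) g) ->
  exists F : list X, forall v, in_conic_hull d gs v -> in_conic_hull d (map f F) v.
Proof.
  induction gs as [|g gs IH]; intros H.
  - exists []. intros v [[|c cs] [Hl [_ Hv]]]; [|discriminate].
    exists []. split; [reflexivity|]. split; [constructor|exact Hv].
  - destruct (H g (or_introl eq_refl)) as [ms [a [Ha1 [Ha2 Ha3]]]].
    destruct IH as [F' HF']; [intros g' Hg'; apply H; now right|].
    exists (ms ++ F'). intros v [[|c cs] [Hl [Hnn Hv]]]; [discriminate|].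
    inversion Hnn as [|? ? Hc Hcs]; subst.
    destruct (HF' (lincomb cs gs)) as [cs' [Hc1 [Hc2 Hc3]]].
    { exists cs. split; [simpl in Hl; lia|]. split; [exact Hcs|]. reflexivity. }
    rewrite length_map in Ha1.
    exists (map (Rmult c) a ++ cs').
    split; [rewrite map_app, !length_app, !length_map, Hc1, length_map; lia|].
    split.
    + apply Forall_app. split; [|exact Hc2]. apply Forall_forall. intros x Hx.
      apply in_map_iff in Hx. destruct Hx as [y [<- Hy]].
      rewrite Forall_forall in Ha2. specialize (Ha2 y Hy). nra.
    + intros i Hi. rewrite Hv, map_app, lincomb_app by (rewrite ?length_map; lia || exact Hi).
      simpl. rewrite lincomb_scale, <- Ha3, <- Hc3 by exact Hi. reflexivity.
Qed.

Lemma floor_nat c : 0 <= c -> exists n : nat, INR n <= c < INR n + 1.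
Proof.
  intros Hc. destruct (archimed c) as [H1 H2].
  assert (Hz : (0 <= up c - 1)%Z).
  { assert (Hpos : 0 < IZR (up c)) by lra. apply lt_IZR in Hpos. lia. }
  exists (Z.to_nat (up c - 1)). rewrite INR_IZR_INZ, Z2Nat.id by exact Hz.
  rewrite minus_IZR. simpl. lra.
Qed.

Lemma floor_comb (T : Type) (phi : T -> nat -> nat) F : forall cs, length cs = length F ->
  Forall (fun c => 0 <= c) cs -> exists w : nat -> nat, forall i,
    INR (ncomb phi F w i) <= lincomb cs (map (realvec T phi) F) i <=
    INR (ncomb phi F w i) + INR (ncomb phi F (fun _ => 1%nat) i).
Proof.
  induction F as [|f F IH]; intros [|c cs] Hl Hnn; try discriminate.
  - exists (fun _ => 0%nat). intros i. simpl. lra.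
  - inversion Hnn as [|? ? Hc Hcs]; subst.
    destruct (IH cs ltac:(simpl in Hl; lia) Hcs) as [w' Hw'].
    destruct (floor_nat c Hc) as [n Hn].
    exists (fun j => match j with O => n | S j' => w' j' end). intros i.
    specialize (Hw' i). simpl. rewrite !plus_INR, !mult_INR.
    change (INR 1) with 1. change (INR 0) with 0. change (fun j => w' j) with w'.
    change (realvec T phi f i) with (INR (phi f i)).
    pose proof (pos_INR (phi f i)).
    assert (INR n * INR (phi f i) <= c * INR (phi f i)) by (apply Rmult_le_compat_r; lra).
    assert (c * INR (phi f i) <= (INR n + 1) * INR (phi f i)) by (apply Rmult_le_compat_r; lra).
    lra.
Qed.

End RealCones.

Lemma in_map_seq (X : Type) (f : nat -> X) k n : k < n -> In (f k) (map f (seq 0 n)).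
Proof. intros Hk. apply in_map, in_seq. lia. Qed.

Section Finitary.
Variables (T : Type) (add : T -> T -> T) (zero : T) (d : nat) (phi : T -> nat -> nat).
Hypothesis Hemb : embeds_in_Nd T add zero d phi.

(* A polyhedral [cone(M)] is generated by finitely many elements of [M]: each of its
   finitely many generators is itself a nonnegative combination of elements of [M]. *)
Lemma cone_generated_by_elements : cone_polyhedral T d phi ->
  exists F : list T, forall v, in_cone T d phi v -> in_conic_hull d (map (realvec T phi) F) v.
Proof.
  intros [gs Hgs].
  destruct (conic_hull_compose T (realvec T phi) d gs) as [F HF].
  { intros g Hg. apply Hgs, conic_hull_generator, Hg. }
  exists F. intros v Hv. apply HF, Hgs, Hv.
Qed.

Lemma element_in_cone x : in_cone T d phi (realvec T phi x).
Proof.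
  exists [x], [1%R]. split; [reflexivity|]. split; [constructor; [lra|constructor]|].
  intros i _. simpl. lra.
Qed.

Lemma integer_decomposition F :
  (forall v, in_cone T d phi v -> in_conic_hull d (map (realvec T phi) F) v) ->
  forall x, exists w, forall i, i < d ->
    ncomb phi F w i <= phi x i <= ncomb phi F w i + ncomb phi F (fun _ => 1) i.
Proof.
  intros HF x. destruct (HF _ (element_in_cone x)) as [cs [Hl [Hnn Hx]]].
  destruct (floor_comb T phi F cs ltac:(rewrite Hl; apply length_map) Hnn) as [w Hw].
  exists w. intros i Hi. specialize (Hw i). rewrite <- Hx in Hw by exact Hi.
  unfold realvec in Hw. rewrite <- plus_INR in Hw. destruct Hw as [Hw1 Hw2].
  apply INR_le in Hw1. apply INR_le in Hw2. lia.
Qed.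

Section Remainders.
Variables (F : list T) (C : nat -> nat).
Hypothesis Hdec : forall x, exists w, forall i, i < d ->
  ncomb phi F w i <= phi x i <= ncomb phi F w i + C i.

(* Dickson's lemma on the pairs [(x, w)] with coordinates [w j], the remainder
   [r = x - sum_j w j F_j] and [C - r]: every decomposition of a nonzero [x]
   dominates one of a nonzero [y] with the same remainder and bounded weights [v];
   then [x = y + sum_j (w j - v j) F_j] with [y] in a fixed box. *)
Lemma bounded_nonzero_divisor : exists b : nat -> nat, forall x, x <> zero ->
  exists y w, y <> zero /\ (forall i, i < d -> phi y i <= b i) /\ x = add y (ncomb_elt T add zero F w).
Proof.
  set (rem := fun (a : T * (nat -> nat)) i => phi (fst a) i - ncomb phi F (snd a) i).
  set (I := map (fun j a => snd a j) (seq 0 (length F)) ++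
            map (fun i a => rem a i) (seq 0 d) ++ map (fun i a => C i - rem a i) (seq 0 d)).
  set (P := fun a : T * (nat -> nat) => fst a <> zero /\ forall i, i < d ->
              ncomb phi F (snd a) i <= phi (fst a) i <= ncomb phi F (snd a) i + C i).
  destruct (dickson _ I P) as [B HB].
  exists (fun i => B + ncomb phi F (fun _ => B) i). intros x Hx.
  destruct (Hdec x) as [w Hw].
  destruct (HB (x, w)) as [[y v] [[Hy Hyv] [Hle Hbd]]]; [split; assumption|].
  simpl in Hy, Hyv.
  assert (Hweights : forall j, j < length F -> v j <= w j /\ v j <= B).
  { intros j Hj. assert (Hin : In (fun a : T * (nat -> nat) => snd a j) I).
    { apply in_or_app. left. exact (in_map_seq _ (fun j a => snd a j) _ _ Hj). }
    exact (conj (Hle _ Hin) (Hbd _ Hin)). }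
  assert (Hrem : forall i, i < d -> rem (y, v) i = rem (x, w) i /\ rem (y, v) i <= B).
  { intros i Hi.
    assert (Hin1 : In (fun a => rem a i) I).
    { apply in_or_app. right. apply in_or_app. left.
      exact (in_map_seq _ (fun i a => rem a i) _ _ Hi). }
    assert (Hin2 : In (fun a => C i - rem a i) I).
    { apply in_or_app. right. apply in_or_app. right.
      exact (in_map_seq _ (fun i a => C i - rem a i) _ _ Hi). }
    pose proof (Hle _ Hin1). pose proof (Hle _ Hin2). pose proof (Hbd _ Hin1).
    pose proof (Hw i Hi). pose proof (Hyv i Hi). unfold rem in *. simpl in *. lia. }
  exists y, (fun j => w j - v j). split; [exact Hy|]. split.
  - intros i Hi. destruct (Hrem i Hi) as [_ HrB]. pose proof (Hyv i Hi).
    pose proof (ncomb_mono phi F i v (fun _ => B) ltac:(intros j Hj; apply Hweights, Hj)).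
    unfold rem in HrB. simpl in HrB. lia.
  - apply (phi_inj _ _ _ _ _ Hemb). intros i Hi.
    rewrite (phi_add _ _ _ _ _ Hemb), (phi_ncomb_elt _ _ _ _ _ Hemb) by exact Hi.
    pose proof (ncomb_sub phi F i w v ltac:(intros j Hj; apply Hweights, Hj)).
    destruct (Hrem i Hi) as [Hr _]. pose proof (Hw i Hi). pose proof (Hyv i Hi).
    unfold rem in Hr. simpl in Hr. lia.
Qed.

Lemma nonzero_in_finite_translate : exists S : list T, forall x, x <> zero ->
  exists s m, In s S /\ x = add s m.
Proof.
  destruct bounded_nonzero_divisor as [b Hb].
  destruct (bounded_elements_finite _ _ _ _ _ Hemb b) as [S HS].
  exists S. intros x Hx. destruct (Hb x Hx) as [y [w [_ [Hyb ->]]]].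
  exists y, (ncomb_elt T add zero F w). split; [apply HS, Hyb|reflexivity].
Qed.

End Remainders.
End Finitary.

Theorem mainTheorem17 (T : Type) (add : T -> T -> T) (zero : T)
    (d : nat) (phi : T -> nat -> nat) :
  @embeds_in_Nd T add zero d phi ->
  @cone_polyhedral T d phi ->
  @finitary T add zero.
Proof.
  intros Hemb Hpoly.
  destruct (cone_generated_by_elements T d phi Hpoly) as [F HF].
  destruct (nonzero_in_finite_translate T add zero d phi Hemb F (ncomb phi F (fun _ => 1))
              (integer_decomposition T d phi F HF)) as [S HS].
  split; [exact (embedded_BFM T add zero d phi Hemb)|].
  exists S, 1. split; [lia|].
  intros x [[|y [|y' l]] [Hlen [Hnz <-]]]; try discriminate.
  inversion Hnz as [|? ? Hy _]; subst. simpl.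
  rewrite (add_zero_r _ _ _ _ _ Hemb). exact (HS y Hy).
Qed.
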